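(* Let $U$ be a nonempty finite set and let $R\subseteq U\times U$ be a serial and transitive relation. Then $(Reg(U,R),\subseteq)$ is a semimodular lattice; that is, it is a lattice and for all $X,Y\in Reg(U,R)$, if $Y$ covers $X\wedge Y$ then $X\vee Y$ covers $X$.
   Context: For $x\in U$, the successor neighborhood is $R_s(x)=\{y\in U\mid xRy\}$. $R$ is serial if for every $x\in U$ there is $y\in U$ with $xRy$; $R$ is transitive if $xRy$ and $yRz$ imply $xRz$. For $X\subseteq U$, the lower and upper approximations are $\underline{R}(X)=\{x\in U\mid R_s(x)\subseteq X\}$ and $\overline{R}(X)=\{x\in U\mid R_s(x)\cap X\neq\emptyset\}$. A set $X\subseteq U$ is a regular set if $X=\underline{R}(\overline{R}(X))$; $Reg(U,R)$ denotes the collection of all regular sets, ordered by inclusion. In a poset, $b$ covers $a$ if $a<b$ and there is no $c$ with $a<c<b$. *)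

From mathcomp Require Import all_boot.
Set Implicit Arguments. Unset Strict Implicit. Unset Printing Implicit Defensive.

Section RoughSets.
Variable U : finType.
Variable R : rel U.

Definition succN (x : U) : {set U} := [set y | R x y].

Definition serial : Prop := forall x : U, exists y : U, R x y.
Definition transitive_rel : Prop := forall x y z : U, R x y -> R y z -> R x z.

Definition lowerA (X : {set U}) : {set U} := [set x | succN x \subset X].
Definition upperA (X : {set U}) : {set U} := [set x | succN x :&: X != set0].

Definition regular (X : {set U}) : Prop := X = lowerA (upperA X).

Definition is_glb (X Y M : {set U}) : Prop :=
  [/\ regular M, M \subset X, M \subset Y &
      forall Z, regular Z -> Z \subset X -> Z \subset Y -> Z \subset M].

Definition is_lub (X Y J : {set U}) : Prop :=
  [/\ regular J, X \subset J, Y \subset J &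
      forall Z, regular Z -> X \subset Z -> Y \subset Z -> J \subset Z].

Definition reg_is_lattice : Prop :=
  forall X Y, regular X -> regular Y ->
    (exists M, is_glb X Y M) /\ (exists J, is_lub X Y J).

Definition reg_covers (A B : {set U}) : Prop :=
  regular A /\ regular B /\ A \proper B /\
  forall C, regular C -> A \proper C -> C \proper B -> False.

End RoughSets.

From mathcomp Require Import all_boot.
Set Implicit Arguments. Unset Strict Implicit. Unset Printing Implicit Defensive.

(* Write [hull S] for the lower-of-upper approximation, so that the regular
   sets are exactly the fixed points of [hull].  Call a point y final when
   every successor z of y has the same successor neighbourhood as y; by
   finiteness and transitivity every point reaches a final point, and for a
   final y we have y \in hull S iff some successor of y lies in S.
   Consequently a regular set is determined by its final points [finals X]:
   inclusion of regular sets is inclusion of their final points, meets are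
   intersections, and the join hull (X :|: Y) has final points
   finals X :|: finals Y.  Thus X |-> finals X embeds Reg(U,R) into a
   powerset lattice preserving meets and joins, and the covering property is
   reduced to an elementary fact about finite sets ([proper_meet_transfer]). *)

Lemma proper_meet_transfer (T : finType) (A B C : {set T}) :
  A \proper C -> C \proper A :|: B ->
  A :&: B \proper C :&: B /\ C :&: B \proper B.
Proof.
rewrite !properE => /andP[AC CnA] /andP[CAB ABnC]; split.
- rewrite setSI //=; apply: contra CnA => CBAB; apply/subsetP => c cC.
  have := subsetP CAB c cC; rewrite inE => /orP[// | cB].
  by have := subsetP CBAB c; rewrite !inE cC cB => /(_ isT) /andP[].
- rewrite subsetIr /=; apply: contra ABnC => BCB.
  by rewrite subUset AC (subset_trans BCB (subsetIl C B)).
Qed.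

Lemma proper_join_of_meet (T : finType) (A B : {set T}) :
  A :&: B \proper B -> A \proper A :|: B.
Proof.
move=> ABB; apply: properUl; apply: contraL ABB => BA.
by move/setIidPr: BA => ->; rewrite properE subxx.
Qed.

Section RegularSets.
Variables (U : finType) (R : rel U).
Hypotheses (hser : serial R) (htr : transitive_rel R).

Definition hull (S : {set U}) : {set U} := lowerA R (upperA R S).

Definition final (y : U) : bool :=
  [forall z, R y z ==> (succN R z == succN R y)].

Definition finals (X : {set U}) : {set U} := [set f in X | final f].

Lemma in_finals (X : {set U}) f : (f \in finals X) = (f \in X) && final f.
Proof. by rewrite inE. Qed.

Lemma finalP y z : final y -> R y z -> succN R z = succN R y.
Proof. by move=> /forallP /(_ z) /implyP fy /fy /eqP. Qed.

Lemma hullP x (S : {set U}) :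
  x \in hull S <-> forall y, R x y -> exists2 z, R y z & z \in S.
Proof.
rewrite /hull /lowerA inE; split.
- move=> /subsetP xS y xy; have := xS y; rewrite /succN inE => /(_ xy).
  rewrite /upperA inE => /set0Pn [z]; rewrite inE /succN inE => /andP[yz zS].
  by exists z.
- move=> xS; apply/subsetP => y; rewrite /succN inE => /xS [z yz zS].
  by rewrite /upperA inE; apply/set0Pn; exists z; rewrite inE /succN inE yz.
Qed.

Lemma hull_mono (S T : {set U}) : S \subset T -> hull S \subset hull T.
Proof.
move=> /subsetP ST; apply/subsetP => x /hullP xS; apply/hullP => y /xS [z yz zS].
by exists z; last exact: ST.
Qed.

(* Every point reaches a final point: take a successor with a successor
   neighbourhood of minimal size; transitivity makes it final. *)
Lemma exists_final x : exists2 y, R x y & final y.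
Proof.
have [y0 xy0] := hser x.
case: (arg_minnP (fun y => #|succN R y|) xy0) => y xy ymin.
exists y => //; apply/forallP => z; apply/implyP => yz.
have sub : succN R z \subset succN R y.
  by apply/subsetP => w; rewrite !inE => zw; apply: htr yz zw.
by rewrite eqEcard sub ymin //; apply: htr xy yz.
Qed.

Lemma final_hullP y (S : {set U}) :
  final y -> y \in hull S <-> exists2 z, R y z & z \in S.
Proof.
move=> fy; split.
- move=> /hullP yS; have [w yw] := hser y; have [z wz zS] := yS w yw.
  by exists z; first exact: htr yw wz.
- move=> [z yz zS]; apply/hullP => u yu; exists z => //.
  have : z \in succN R u by rewrite (finalP fy yu) inE.
  by rewrite inE.
Qed.

Lemma hull_final_succ x y (S : {set U}) :
  x \in hull S -> R x y -> final y -> y \in hull S.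
Proof.
by move=> /hullP xS xy fy; apply/final_hullP => //; apply: xS.
Qed.

Lemma sub_hull_finals (X T : {set U}) :
  (forall x y, x \in X -> R x y -> final y -> y \in T) -> X \subset hull T.
Proof.
move=> XT; apply/subsetP => x xX; apply/hullP => y xy.
have [y' yy' fy'] := exists_final y; exists y' => //.
by apply: XT xX _ fy'; apply: htr xy yy'.
Qed.

Lemma regular_hull_sub (S X : {set U}) :
  regular R X -> S \subset X -> hull S \subset X.
Proof. by move=> rX SX; rewrite rX -/(hull X) hull_mono. Qed.

Lemma regular_final_succ (X : {set U}) x y :
  regular R X -> x \in X -> R x y -> final y -> y \in X.
Proof. by move=> rX; rewrite rX; apply: hull_final_succ. Qed.

Lemma hull_regular (S : {set U}) : regular R (hull S).
Proof.
apply/eqP; rewrite eqEsubset; apply/andP; split.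
  by apply: sub_hull_finals => x y xS; apply: hull_final_succ.
apply/subsetP => x /hullP xS; apply/hullP => y /xS [z yz /hullP zS].
have [w zw] := hser z; have [v wv vS] := zS w zw.
by exists v; first by apply: htr yz (htr zw wv).
Qed.

Lemma regular_inter (X Y : {set U}) :
  regular R X -> regular R Y -> regular R (X :&: Y).
Proof.
move=> rX rY; apply/eqP; rewrite eqEsubset; apply/andP; split.
  apply: sub_hull_finals => x y; rewrite !inE => /andP[xX xY] xy fy.
  by rewrite (regular_final_succ rX xX xy fy) (regular_final_succ rY xY xy fy).
by rewrite subsetI -/(hull _) (regular_hull_sub rX (subsetIl X Y))
  (regular_hull_sub rY (subsetIr X Y)).
Qed.

Lemma regular_subsetE (X C : {set U}) : regular R X -> regular R C ->
  (X \subset C) = (finals X \subset finals C).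
Proof.
move=> rX rC; apply/idP/idP => [XC | FXC].
  by apply/subsetP => f; rewrite !inE => /andP[/(subsetP XC) -> ->].
rewrite rC; apply: sub_hull_finals => x y xX xy fy.
have yX := regular_final_succ rX xX xy fy.
by have := subsetP FXC y; rewrite !inE yX fy => /(_ isT) /andP[].
Qed.

Lemma regular_properE (X C : {set U}) : regular R X -> regular R C ->
  (X \proper C) = (finals X \proper finals C).
Proof.
by move=> rX rC; rewrite !properE (regular_subsetE rX rC) (regular_subsetE rC rX).
Qed.

Lemma finals_inter (X Y : {set U}) : finals (X :&: Y) = finals X :&: finals Y.
Proof. by apply/setP => f; rewrite !inE andbACA andbb. Qed.

Lemma regular_finalP (X : {set U}) f : regular R X -> final f ->
  f \in X <-> exists2 z, R f z & z \in X.
Proof. by move=> rX ff; rewrite {1}rX; apply: final_hullP. Qed.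

Lemma finals_hull_union (X Y : {set U}) : regular R X -> regular R Y ->
  finals (hull (X :|: Y)) = finals X :|: finals Y.
Proof.
move=> rX rY; apply/setP => f; rewrite in_setU !in_finals.
case ff: (final f); rewrite ?andbF ?andbT //.
apply/idP/idP.
  move=> /(final_hullP (X :|: Y) ff) [z fz]; rewrite in_setU => /orP[zX | zY].
    by apply/orP; left; apply/(regular_finalP rX ff); exists z.
  by apply/orP; right; apply/(regular_finalP rY ff); exists z.
move=> /orP[fX | fY]; apply/(final_hullP (X :|: Y) ff).
  by have [z fz zX] := (regular_finalP rX ff).1 fX; exists z; rewrite // in_setU zX.
by have [z fz zY] := (regular_finalP rY ff).1 fY; exists z; rewrite // in_setU zY orbT.
Qed.

Lemma inter_is_glb (X Y : {set U}) :
  regular R X -> regular R Y -> is_glb R X Y (X :&: Y).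
Proof.
move=> rX rY; split; [exact: regular_inter | exact: subsetIl | exact: subsetIr |].
by move=> Z _ ZX ZY; rewrite subsetI ZX ZY.
Qed.

Lemma hull_union_is_lub (X Y : {set U}) :
  regular R X -> regular R Y -> is_lub R X Y (hull (X :|: Y)).
Proof.
move=> rX rY; split; first exact: hull_regular.
- by rewrite {1}rX hull_mono ?subsetUl.
- by rewrite {1}rY hull_mono ?subsetUr.
- by move=> Z rZ XZ YZ; rewrite regular_hull_sub // subUset XZ YZ.
Qed.

End RegularSets.

Lemma glb_unique (U : finType) (R : rel U) (X Y M M' : {set U}) :
  is_glb R X Y M -> is_glb R X Y M' -> M = M'.
Proof.
move=> [rM MX MY Mmax] [rM' M'X M'Y M'max].
by apply/eqP; rewrite eqEsubset M'max ?Mmax.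
Qed.

Lemma lub_unique (U : finType) (R : rel U) (X Y J J' : {set U}) :
  is_lub R X Y J -> is_lub R X Y J' -> J = J'.
Proof.
move=> [rJ XJ YJ Jmin] [rJ' XJ' YJ' J'min].
by apply/eqP; rewrite eqEsubset Jmin ?J'min.
Qed.

Theorem proposition1 (U : finType) (R : rel U)
  (hU : 0 < #|U|) (hser : serial R) (htr : transitive_rel R) :
  reg_is_lattice R /\
  (forall X Y M J : {set U}, regular R X -> regular R Y ->
     is_glb R X Y M -> is_lub R X Y J ->
     reg_covers R M Y -> reg_covers R X J).
Proof.
have glbE X Y : regular R X -> regular R Y -> is_glb R X Y (X :&: Y).
  exact: inter_is_glb.
have lubE X Y : regular R X -> regular R Y -> is_lub R X Y (hull R (X :|: Y)).
  exact: hull_union_is_lub.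
have regI := regular_inter hser htr; have properF := regular_properE hser htr.
split=> [X Y rX rY | X Y M J rX rY glbM lubJ [rM [_ [MY Mcov]]]].
  by split; [exists (X :&: Y); apply: glbE | exists (hull R (X :|: Y)); apply: lubE].
have eM : M = X :&: Y by apply: glb_unique glbM (glbE _ _ rX rY).
have eJ : J = hull R (X :|: Y) by apply: lub_unique lubJ (lubE _ _ rX rY).
subst M J; have rJ := hull_regular hser htr (X :|: Y).
have finalsJ := finals_hull_union hser htr rX rY.
move: MY Mcov; rewrite (properF _ _ rM rY) finals_inter => FMY Mcov.
split=> //; split=> //; split.
  by rewrite (properF _ _ rX rJ) finalsJ proper_join_of_meet.
move=> C rC; rewrite (properF _ _ rX rC) (properF _ _ rC rJ) finalsJ => XC CJ.
have [FMC FCY] := proper_meet_transfer XC CJ.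
have rCY := regI _ _ rC rY.
apply: (Mcov (C :&: Y) rCY).
  by rewrite (properF _ _ rM rCY) !finals_inter.
by rewrite (properF _ _ rCY rY) finals_inter.
Qed.
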